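(* Let $G_1,G_2$ be finite groups written additively, $H$ a subgroup of $G_1$, and $k\ge 2$. If there exist a $(G_1,H,k,1)$-BRDF and a $(G_2,k,1)$-HDM, then there exists a $(G_1\times G_2,H\times G_2,k,1)$-BRDF.
   Context: For a finite additive group $G$ with subgroup $H$, a $(G,H,k,\lambda)$-RDF is a collection of $k$-subsets of $G$ (base blocks) whose differences $x-y$ ($x\neq y$ in a common base block) cover every element of $G\setminus H$ exactly $\lambda$ times and no element of $H$. A $(G,H,k,\lambda)$-BRDF is such an RDF in which all base blocks are disjoint from $H$ and the base blocks together with their negatives $-B=\{-b:b\in B\}$ are pairwise disjoint. For a group $G$ of order $g$, a $(G,k,1)$ difference matrix is a $k\times g$ matrix with entries in $G$ such that, for any two distinct rows, the entrywise difference is a permutation of $G$; it is homogeneous (an HDM) if moreover every row is a permutation of $G$. *)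

From HB Require Import structures.
From mathcomp Require Import all_boot all_order all_algebra.
Set Implicit Arguments. Unset Strict Implicit. Unset Printing Implicit Defensive.
Import GRing.Theory.
Local Open Scope ring_scope.

Definition is_addsubgroup (G : finZmodType) (H : {set G}) : Prop :=
  0 \in H /\ {in H &, forall x y, x - y \in H}.

Definition diff_count (G : finZmodType) (F : seq {set G}) (g : G) : nat :=
  \sum_(B <- F) #|[set xy in setX B B | (xy.1 != xy.2) && ((xy.1 - xy.2)%R == g)]|.

(* (G,H,k,lambda)-RDF; the base blocks form a list F (a collection, possibly
   with repetitions) *)
Definition is_RDF (G : finZmodType) (H : {set G}) (k lambda : nat)
    (F : seq {set G}) : Prop :=
  (forall B, B \in F -> #|B| = k) /\
  (forall g : G, g \notin H -> diff_count F g = lambda) /\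
  (forall g : G, g \in H -> diff_count F g = 0%N).

Definition negset (G : finZmodType) (B : {set G}) : {set G} := [set - x | x in B].

Definition is_BRDF (G : finZmodType) (H : {set G}) (k lambda : nat)
    (F : seq {set G}) : Prop :=
  is_RDF H k lambda F /\
  (forall B, B \in F -> [disjoint B & H]) /\
  (let L := F ++ [seq negset B | B <- F] in
   forall i j : nat, (i < size L)%N -> (j < size L)%N -> i != j ->
     [disjoint nth set0 L i & nth set0 L j]).

Definition is_DM (G : finZmodType) (k : nat) (M : 'M[G]_(k, #|G|)) : Prop :=
  forall i i' : 'I_k, i != i' -> bijective (fun j : 'I_#|G| => M i j - M i' j).

Definition is_HDM (G : finZmodType) (k : nat) (M : 'M[G]_(k, #|G|)) : Prop :=
  is_DM M /\ forall i : 'I_k, bijective (fun j : 'I_#|G| => M i j).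

(* direct product of finite additive groups: componentwise addition
   (the canonical zmodType on pairs), joined with the finite structure *)
HB.instance Definition _ (G1 G2 : finZmodType) := GRing.Zmodule.on (G1 * G2)%type.

From mathcomp Require Import all_boot all_order all_algebra.
Set Implicit Arguments. Unset Strict Implicit. Unset Printing Implicit Defensive.
Import GRing.Theory.

(* Enumerate each base block B of the BRDF as b_1, ..., b_k and, for every
   column j of the difference matrix M, take the block {(b_i, M i j) : i}.
   For i <> i' the column differences M i j - M i' j run through G2 exactly
   once, so every difference (d, h) occurs as often in the lifted family as d
   occurs in the original one. A point (x, y) lies in a lifted block of B only
   if x lies in B, and then, the rows of M being permutations, for at most one
   column j; hence each point is covered by the lifted blocks and their
   negatives at most as often as x is covered by the original ones. *)

Lemma count_sum_nat (T : Type) (a : pred T) (s : seq T) :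
  count a s = \sum_(y <- s) (a y : nat).
Proof. by rewrite -sum1_count big_mkcond. Qed.

Lemma sum_nat_card (T : finType) (P : pred T) :
  \sum_(y : T) (P y : nat) = #|[set y | P y]|.
Proof.
by rewrite -sum1dep_card [RHS]big_mkcond; apply: eq_bigr => y _; case: (P y).
Qed.

Lemma nth_disjoint_countP (T : finType) (L : seq {set T}) :
  (forall i j : nat, (i < size L)%N -> (j < size L)%N -> i != j ->
     [disjoint nth set0 L i & nth set0 L j]) <->
  (forall x : T, (count (fun A : {set T} => x \in A) L <= 1)%N).
Proof.
elim: L => [|A L IH] /=; first by split=> // _ i j.
have count_cons x :
    ((x \in A) + count (fun B : {set T} => x \in B) L <= 1)%N =
    (count (fun B : {set T} => x \in B) L <= 1)%N &&
    ((x \in A) ==> ~~ has (fun B : {set T} => x \in B) L).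
  by rewrite has_count; case: (x \in A); case: (count _ L) => [|[]].
split=> [disj x | le1].
  rewrite count_cons; apply/andP; split.
    by apply: (proj1 IH) => i j lti ltj ij; apply: (disj i.+1 j.+1).
  apply/implyP => xA; apply/hasPn => _ /(nthP set0) [j ltj <-].
  by rewrite (disjointFr (disj 0%N j.+1 isT ltj isT) xA).
have disjA j : (j < size L)%N -> [disjoint A & nth set0 L j].
  move=> ltj; apply/pred0P => x /=; apply/negbTE/negP => /andP [xA xB].
  have := le1 x; rewrite count_cons xA /= => /andP [_ /hasPn].
  by move/(_ _ (mem_nth set0 ltj)); rewrite xB.
have le1L x : (count (fun B : {set T} => x \in B) L <= 1)%N.
  by have := le1 x; rewrite count_cons => /andP [].
case=> [|i] [|j] //= lti ltj ij; first exact: disjA.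
  by rewrite disjoint_sym; apply: disjA.
exact: (proj2 IH le1L).
Qed.

Section Blocks.

Variable G : finZmodType.

Definition block_diff_count (B : {set G}) (g : G) : nat :=
  #|[set xy in setX B B | (xy.1 != xy.2) && (xy.1 - xy.2 == g)%R]|.

Lemma diff_countE (F : seq {set G}) g :
  diff_count F g = \sum_(B <- F) block_diff_count B g.
Proof. by []. Qed.

Lemma block_diff_count_imset (X : finType) (f : X -> G) g : injective f ->
  block_diff_count [set f x | x : X] g =
  #|[set p : X * X | (p.1 != p.2) && (f p.1 - f p.2 == g)%R]|.
Proof.
move=> f_inj; pose f2 (p : X * X) := (f p.1, f p.2).
have f2_inj : injective f2 by move=> [a b] [c d] [/f_inj -> /f_inj ->].
rewrite -(card_imset _ f2_inj); apply: eq_card => -[u v]; apply/idP/imsetP.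
- rewrite !inE /= => /andP [/andP [/imsetP [a _ ->] /imsetP [b _ ->]]].
  by rewrite (inj_eq f_inj) => ab; exists (a, b); rewrite ?inE.
- move=> [[a b] + [-> ->]]; rewrite !inE /= (inj_eq f_inj) => ->.
  by rewrite !imset_f.
Qed.

Definition block_enum (k : nat) (B : {set G}) (i : 'I_k) : G := nth 0%R (enum B) i.

Variables (k : nat) (B : {set G}).
Hypothesis cardB : #|B| = k.

Lemma block_enum_inj : injective (@block_enum k B).
Proof.
move=> i j /eqP; rewrite /block_enum nth_uniq ?enum_uniq -?cardE ?cardB //.
by move/eqP/val_inj.
Qed.

Lemma imset_block_enum : [set block_enum B i | i : 'I_k] = B.
Proof.
apply/setP => x; apply/imsetP/idP => [[i _ ->]|xB].
  by rewrite /block_enum -mem_enum mem_nth // -cardE cardB.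
have ltxk : (index x (enum B) < k)%N by rewrite -cardB cardE index_mem mem_enum.
by exists (Ordinal ltxk); rewrite // /block_enum nth_index ?mem_enum.
Qed.

End Blocks.

Lemma mem_negset (G : finZmodType) (A : {set G}) x : (x \in negset A) = (- x \in A)%R.
Proof.
apply/imsetP/idP => [[y yA ->]|xA]; first by rewrite opprK.
by exists (- x)%R; rewrite ?opprK.
Qed.

Section LiftBlock.

Variables (G1 G2 : finZmodType) (k : nat) (M : 'M[G2]_(k, #|G2|)).

Lemma card_DM_diff_eq i i' h : is_DM M -> i != i' ->
  #|[set j | M i j - M i' j == h]%R| = 1%N.
Proof.
move=> DM_M /DM_M [col col_diffK diffK].
suff -> : [set j | M i j - M i' j == h]%R = [set col h] by rewrite cards1.
by apply/setP => j; rewrite !inE; apply/eqP/eqP => [<- | ->].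
Qed.

Definition lift_block (b : 'I_k -> G1) (j : 'I_#|G2|) : {set (G1 * G2)%type} :=
  [set (b i, M i j) | i : 'I_k].

Variable b : 'I_k -> G1.
Hypothesis b_inj : injective b.

Lemma lift_block_inj j : injective (fun i => (b i, M i j)).
Proof. by move=> i i' [/b_inj]. Qed.

Lemma card_lift_block j : #|lift_block b j| = k.
Proof. by rewrite card_imset ?card_ord //; apply: lift_block_inj. Qed.

Lemma lift_block_fst j x : x \in lift_block b j -> x.1 \in [set b i | i : 'I_k].
Proof. by case/imsetP=> i _ -> /=; rewrite imset_f. Qed.

Lemma block_diff_count_lift j d h :
  block_diff_count (lift_block b j) (d, h) =
  #|[set p : 'I_k * 'I_k |
     (p.1 != p.2) && (b p.1 - b p.2 == d)%R && (M p.1 j - M p.2 j == h)%R]|.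
Proof.
rewrite /lift_block (block_diff_count_imset _ (lift_block_inj (j := j))).
apply: eq_card => p; rewrite !inE /= xpair_eqE andbA; congr (_ && _ && _).
Qed.

Lemma sum_block_diff_count_lift d h : is_DM M ->
  \sum_(j < #|G2|) block_diff_count (lift_block b j) (d, h) =
  block_diff_count [set b i | i : 'I_k] d.
Proof.
move=> DM_M; under eq_bigr do rewrite block_diff_count_lift -sum_nat_card.
rewrite block_diff_count_imset // -sum_nat_card exchange_big /=.
apply: eq_bigr => p _.
have [/andP [p12 _] | _] := boolP ((p.1 != p.2) && (b p.1 - b p.2 == d)%R).
  by rewrite sum_nat_card (card_DM_diff_eq h DM_M p12).
by rewrite big1.
Qed.

Lemma sum_mem_lift_block x : (forall i, injective (fun j => M i j)) ->
  (\sum_(j < #|G2|) (x \in lift_block b j : nat) <= (x.1 \in [set b i | i : 'I_k]))%N.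
Proof.
move=> rows_inj; rewrite sum_nat_card; have [_ | x1_notin] := boolP (x.1 \in _).
  apply/card_le1_eqP => j j'; rewrite !inE.
  by case/imsetP=> i _ -> /imsetP [i' _ [/b_inj <- /rows_inj]].
rewrite leqn0 cards_eq0; apply/eqP/setP => j; rewrite !inE.
exact/negbTE/(contra (@lift_block_fst j x)).
Qed.

End LiftBlock.

Section LiftBlocks.

Variables (G1 G2 : finZmodType) (k : nat) (M : 'M[G2]_(k, #|G2|)).
Variable F : seq {set G1}.
Hypothesis cardF : forall B, B \in F -> #|B| = k.

Definition lift_blocks : seq {set (G1 * G2)%type} :=
  [seq lift_block M (block_enum B) j | B <- F, j <- enum 'I_#|G2|].

Lemma sum_lift_blocks (E : {set (G1 * G2)%type} -> nat) :
  \sum_(A <- lift_blocks) E A =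
  \sum_(B <- F) \sum_(j < #|G2|) E (lift_block M (block_enum B) j).
Proof. by rewrite big_allpairs_dep; apply: eq_bigr => B _; rewrite big_enum. Qed.

Lemma lift_blocks_card A : A \in lift_blocks -> #|A| = k.
Proof.
by case/allpairsP=> -[B j] [BF _ ->]; apply/card_lift_block/block_enum_inj/cardF.
Qed.

Lemma diff_count_lift_blocks d h : is_DM M ->
  diff_count lift_blocks (d, h) = diff_count F d.
Proof.
move=> DM_M; rewrite !diff_countE sum_lift_blocks big_seq [RHS]big_seq.
apply: eq_bigr => B /cardF cardB.
by rewrite sum_block_diff_count_lift ?imset_block_enum //; apply: block_enum_inj.
Qed.

Lemma lift_blocks_disjoint (H : {set G1}) A :
  (forall B, B \in F -> [disjoint B & H]) -> A \in lift_blocks ->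
  [disjoint A & setX H [set: G2]].
Proof.
move=> disjFH /allpairsP [[B j] [BF _ ->]] /=.
rewrite disjoint_subset; apply/subsetP => x /lift_block_fst.
rewrite imset_block_enum ?cardF // => x1B.
by rewrite !inE negb_and (disjointFr (disjFH _ BF) x1B).
Qed.

Hypothesis rows_inj : forall i, injective (fun j => M i j).

Lemma count_mem_lift_blocks (x : G1 * G2) :
  (count (fun A : {set G1 * G2} => x \in A) lift_blocks <=
   count (fun B : {set G1} => x.1 \in B) F)%N.
Proof.
rewrite !count_sum_nat sum_lift_blocks big_seq [X in (_ <= X)%N]big_seq.
apply: leq_sum => B /cardF cardB; rewrite -{2}(imset_block_enum cardB).
exact: sum_mem_lift_block (block_enum_inj cardB) _ rows_inj.
Qed.

Lemma count_mem_lift_blocks_negset (x : G1 * G2) :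
  (count (fun A : {set G1 * G2} => x \in A)
     (lift_blocks ++ [seq negset A | A <- lift_blocks]) <=
   count (fun B : {set G1} => x.1 \in B) (F ++ [seq negset B | B <- F]))%N.
Proof.
rewrite !count_cat !count_map leq_add ?count_mem_lift_blocks //.
have := count_mem_lift_blocks (- x)%R.
by congr (_ <= _)%N; apply: eq_count => A; rewrite /= mem_negset.
Qed.

End LiftBlocks.

Theorem mainTheorem14 (G1 G2 : finZmodType) (H : {set G1}) (k : nat) :
  is_addsubgroup H -> (2 <= k)%N ->
  (exists F : seq {set G1}, is_BRDF H k 1 F) ->
  (exists M : 'M[G2]_(k, #|G2|), is_HDM M) ->
  exists F' : seq {set (G1 * G2)%type}, is_BRDF (setX H [set: G2]) k 1 F'.
Proof.
move=> _ _ [F [[cardF [diff1 diff0]] [disjFH disjF]]] [M [DM_M rows_bij]].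
have rows_inj i : injective (fun j => M i j) by apply/bij_inj/rows_bij.
exists (lift_blocks M F); split; [split; [|split] | split].
- exact: lift_blocks_card.
- move=> [d h]; rewrite in_setX in_setT andbT => dH.
  by rewrite diff_count_lift_blocks ?diff1.
- move=> [d h]; rewrite in_setX in_setT andbT => dH.
  by rewrite diff_count_lift_blocks ?diff0.
- by move=> A; apply: lift_blocks_disjoint.
move: disjF => /= /nth_disjoint_countP count_le1; apply/nth_disjoint_countP => x.
exact: leq_trans (count_mem_lift_blocks_negset cardF rows_inj x) (count_le1 x.1).
Qed.
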